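(* A nonnegative matrix $M$ with $\operatorname{rank}(M)\ge 2$ is a slack matrix of a polyhedral cone if and only if $M_{\mathrm{inc}}$ is an incidence matrix of some $\operatorname{rank}(M)$-dimensional pointed polyhedral cone.
   Context: A matrix $S\in\mathbb{R}^{p\times q}$ is a slack matrix of a polyhedral cone $K\subseteq\mathbb{R}^n$ if there are $A\in\mathbb{R}^{p\times n}$, $B\in\mathbb{R}^{n\times q}$ with $K=\{x\in\mathbb{R}^n: x^TB\ge 0\}=\{y^TA: y\in\mathbb{R}_+^p\}$ and $S=AB$. For a matrix $M$, $M_{\mathrm{inc}}$ is the $0/1$-matrix with $(M_{\mathrm{inc}})_{ij}=1$ iff $M_{ij}=0$. An incidence matrix of a polyhedral cone $K$ is a matrix $S_{\mathrm{inc}}$ for some slack matrix $S$ of $K$. A cone is pointed if its lineality space is $\{0\}$; its dimension is the dimension of its linear span. *)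

From HB Require Import structures.
From mathcomp Require Import all_boot all_order all_algebra.
From mathcomp Require Import reals.
Set Implicit Arguments. Unset Strict Implicit. Unset Printing Implicit Defensive.
Import Order.TTheory GRing.Theory Num.Theory.
Local Open Scope ring_scope.

Definition hrep (R : realType) (n q : nat) (B : 'M[R]_(n, q)) (x : 'rV[R]_n) : Prop :=
  forall j : 'I_q, 0 <= (x *m B) 0 j.

Definition vrep (R : realType) (p n : nat) (A : 'M[R]_(p, n)) (x : 'rV[R]_n) : Prop :=
  exists y : 'rV[R]_p, (forall i : 'I_p, 0 <= y 0 i) /\ x = y *m A.

Definition slack_matrix_of (R : realType) (n p q : nat) (K : 'rV[R]_n -> Prop)
  (S : 'M[R]_(p, q)) : Prop :=
  exists (A : 'M[R]_(p, n)) (B : 'M[R]_(n, q)),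
    (forall x, K x <-> hrep B x) /\ (forall x, K x <-> vrep A x) /\ S = A *m B.

Definition polyhedral_cone (R : realType) (n : nat) (K : 'rV[R]_n -> Prop) : Prop :=
  exists (p q : nat) (S : 'M[R]_(p, q)), slack_matrix_of K S.

Definition is_slack_matrix (R : realType) (p q : nat) (S : 'M[R]_(p, q)) : Prop :=
  exists (n : nat) (K : 'rV[R]_n -> Prop), slack_matrix_of K S.

Definition inc_mx (R : realType) (p q : nat) (M : 'M[R]_(p, q)) : 'M[R]_(p, q) :=
  \matrix_(i, j) (if M i j == 0 then 1 else 0).

Definition incidence_matrix_of (R : realType) (n p q : nat) (K : 'rV[R]_n -> Prop)
  (N : 'M[R]_(p, q)) : Prop :=
  exists S : 'M[R]_(p, q), slack_matrix_of K S /\ inc_mx S = N.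

Definition pointed (R : realType) (n : nat) (K : 'rV[R]_n -> Prop) : Prop :=
  forall x, K x -> K (- x) -> x = 0.

Definition cone_dim (R : realType) (n : nat) (K : 'rV[R]_n -> Prop) (d : nat) : Prop :=
  exists U : 'M[R]_n,
    (forall x, K x -> (x <= U)%MS) /\
    (forall V : 'M[R]_n, (forall x, K x -> (x <= V)%MS) -> (U <= V)%MS) /\
    \rank U = d.

(* A nonnegative matrix [M] is a slack matrix iff every nonnegative vector of
   its row space is a nonnegative combination of its rows; such an [M] is then
   the slack matrix of a pointed cone in [R^(rank M)], which gives one direction.
   Conversely, let [S] be a slack matrix of a pointed cone of dimension [n] with
   the zero pattern of [M].  By induction on [S], every such [M] has rank at
   least [n], and satisfies the criterion when its rank is exactly [n].
   Redundant inequalities can be dropped.  Otherwise each inequality [j] cuts out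
   a facet, a pointed cone of dimension [n - 1] whose slack matrix is [S] with
   the rows off the facet zeroed; masking [M] the same way kills its [j]-th
   column, lowering the rank by at least one.  If [rank M = n], subtracting from
   a nonnegative [w] in the row space the largest admissible multiple of the
   column sums of [M] leaves a vector vanishing in some column [j], which
   therefore lies in the row space of the [j]-th masked matrix. *)

From HB Require Import structures.
From mathcomp Require Import all_boot all_order all_algebra.
From mathcomp Require Import reals.
From Stdlib Require Import Classical.
From mathcomp Require Import lra.
Import Order.TTheory GRing.Theory Num.Theory.
Set Implicit Arguments. Unset Strict Implicit. Unset Printing Implicit Defensive.
Local Open Scope ring_scope.

Section RowSpaces.
Variable F : fieldType.

Lemma mxrank_ltn_notsub m1 m2 m3 n (M2 : 'M[F]_(m1, n)) (M : 'M_(m2, n))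
    (K : 'M_(m3, n)) :
  (M2 <= M)%MS -> (M2 <= K)%MS -> ~~ (M <= K)%MS -> (\rank M2 < \rank M)%N.
Proof.
move=> sM2M sM2K; apply: contraR; rewrite -leqNgt => leMM2.
have : \rank M2 == \rank M by rewrite eqn_leq leMM2 mxrankS.
by rewrite (mxrank_leqif_sup sM2M).2 => /submx_trans->.
Qed.

Lemma capmx_sub_of_rank_succ m1 m2 m3 n (M2 : 'M[F]_(m1, n)) (M : 'M_(m2, n))
    (K : 'M_(m3, n)) :
  (M2 <= M :&: K)%MS -> ~~ (M <= K)%MS -> (\rank M2).+1 = \rank M ->
  (M :&: K <= M2)%MS.
Proof.
move=> sM2 nsMK rkM2.
have := mxrank_ltn_notsub (capmxSl M K) (capmxSr M K) nsMK.
by rewrite -(mxrank_leqif_sup sM2).2 eqn_leq mxrankS //= -rkM2 ltnS.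
Qed.

Lemma sub_kermx_col m n (X : 'M[F]_(m, n)) j :
  (X <= kermx (delta_mx j 0 : 'cV_n))%MS = (col j X == 0).
Proof. by rewrite sub_kermx colE. Qed.

Lemma mul_col' m n p (X : 'M[F]_(m, n)) (Y : 'M_(n, p.+1)) j :
  X *m col' j Y = col' j (X *m Y).
Proof. by rewrite !col'Esub mulmx_colsub. Qed.

Lemma col'_mul1 m n (X : 'M[F]_(m, n.+1)) j : col' j X = X *m col' j 1%:M.
Proof. by rewrite mul_col' mulmx1. Qed.

Lemma mxrank_col' m n (X : 'M[F]_(m, n.+1)) j : (\rank (col' j X) <= \rank X)%N.
Proof. by rewrite col'_mul1 mxrankM_maxl. Qed.

Lemma col'_row_inj m n (X : 'M[F]_(m, n.+1)) j (v : 'rV_n.+1) :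
  \rank (col' j X) = \rank X -> (v <= X)%MS -> col' j v = 0 -> v = 0.
Proof.
move=> rkX vX v0; have := mxrank_mul_ker X (col' j 1%:M).
rewrite -col'_mul1 rkX -{2}[\rank X]addn0 => /addnI/eqP; rewrite mxrank_eq0.
move=> /eqP cap0; apply/eqP; rewrite -submx0 -cap0 sub_capmx vX.
by rewrite sub_kermx -col'_mul1 v0 /=.
Qed.

End RowSpaces.

Section NonnegMatrices.
Variable R : realFieldType.

Definition nneg_mx m n (X : 'M[R]_(m, n)) := forall i j, 0 <= X i j.

(* The characterization of slack matrices: rowspace(M) meets the nonnegative
   orthant exactly in the cone generated by the rows of [M]. *)
Definition slack_condition p q (M : 'M[R]_(p, q)) :=
  forall w : 'rV_q, (w <= M)%MS -> nneg_mx w -> exists2 y, nneg_mx y & w = y *m M.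

Definition same_zeros p q (M S : 'M[R]_(p, q)) := forall i j, (M i j == 0) = (S i j == 0).

Lemma nneg_mx_mul m n p (X : 'M[R]_(m, n)) (Y : 'M_(n, p)) :
  nneg_mx X -> nneg_mx Y -> nneg_mx (X *m Y).
Proof. by move=> hX hY i j; rewrite mxE sumr_ge0 // => k _; rewrite mulr_ge0. Qed.

Lemma nneg_mx_delta m n i j : nneg_mx (delta_mx i j : 'M[R]_(m, n)).
Proof. by move=> a b; rewrite mxE; case: (_ && _). Qed.

Lemma nneg_mx_col' m n (X : 'M[R]_(m, n.+1)) j : nneg_mx X -> nneg_mx (col' j X).
Proof. by move=> hX a b; rewrite mxE. Qed.

Lemma nneg_mx_diag n (d : 'rV[R]_n) : nneg_mx d -> nneg_mx (diag_mx d).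
Proof. by move=> hd a b; rewrite mxE mulrn_wge0. Qed.

Lemma colsum_gt0 p q (S : 'M[R]_(p, q)) j :
  nneg_mx S -> (0 < ((const_mx 1 : 'rV_p) *m S) 0 j) = (col j S != 0).
Proof.
move=> hS; have sumE : ((const_mx 1 : 'rV_p) *m S) 0 j = \sum_i S i j.
  by rewrite mxE; apply: eq_bigr => i _; rewrite mxE mul1r.
rewrite lt0r sumE sumr_ge0 ?andbT //; congr negb; apply/eqP/eqP => h.
  by apply/matrixP => i k; rewrite !mxE (psumr_eq0P _ h).
by apply: big1 => i _; move/matrixP: h => /(_ i 0); rewrite !mxE.
Qed.

Lemma col_row_eq0 n (z : 'rV[R]_n) j : (col j z == 0) = (z 0 j == 0).
Proof.
apply/eqP/eqP => [/matrixP/(_ 0 0)|z0]; first by rewrite !mxE.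
by apply/matrixP => a b; rewrite !ord1 !mxE.
Qed.

Lemma same_zeros_col p q (M S : 'M[R]_(p, q)) j :
  same_zeros M S -> (col j M == 0) = (col j S == 0).
Proof.
move=> hMS; apply/eqP/eqP => /matrixP h; apply/matrixP => i k; move: (h i k);
  rewrite !mxE => /eqP.
- by rewrite hMS => /eqP.
- by rewrite -hMS => /eqP.
Qed.

Lemma same_zeros_col' p q (M S : 'M[R]_(p, q.+1)) j :
  same_zeros M S -> same_zeros (col' j M) (col' j S).
Proof. by move=> hMS i k; rewrite !mxE. Qed.

Lemma same_zeros_diag_mul p q (M S : 'M[R]_(p, q)) (d : 'rV_p) :
  same_zeros M S -> same_zeros (diag_mx d *m M) (diag_mx d *m S).
Proof. by move=> hMS i k; rewrite !mul_diag_mx !mxE !mulf_eq0 hMS. Qed.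

Lemma slack_condition_col' p q (M : 'M[R]_(p, q.+1)) j :
  \rank (col' j M) = \rank M -> slack_condition (col' j M) -> slack_condition M.
Proof.
move=> rkM slackM' w wM w_ge0.
have [|y y_ge0 wE] := slackM' (col' j w) _ (nneg_mx_col' j w_ge0).
  by rewrite (col'_mul1 w) (col'_mul1 M) submxMr.
exists y => //; apply/eqP; rewrite -subr_eq0; apply/eqP.
apply: (col'_row_inj rkM); first by rewrite addmx_sub ?eqmx_opp ?submxMl.
by rewrite linearB /= -mul_col' -wE subrr.
Qed.

End NonnegMatrices.

Section PointedCones.
Variable R : realFieldType.

(* [(A, B)] presents the pointed full-dimensional cone
   [{x | x B >= 0} = {y A | y >= 0}] of [R^n], whose slack matrix is [A *m B]. *)
Definition full_pointed_pair n p q (A : 'M[R]_(p, n)) (B : 'M[R]_(n, q)) :=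
  [/\ forall x : 'rV_n, nneg_mx (x *m B) -> exists2 y, nneg_mx y & x = y *m A,
      nneg_mx (A *m B), row_free B & row_full A].

Definition redundant_col n q (B : 'M[R]_(n, q.+1)) j :=
  forall x : 'rV_n, nneg_mx (x *m col' j B) -> 0 <= (x *m B) 0 j.

Definition facet_mask p q (S : 'M[R]_(p, q)) j : 'M[R]_p :=
  diag_mx (\row_i (S i j == 0)%:R).

Definition facet_rows n p q (A : 'M[R]_(p, n)) (B : 'M[R]_(n, q)) j :=
  facet_mask (A *m B) j *m A.

Definition support_size p q (S : 'M[R]_(p, q)) := (#|[set i | row i S != 0%R]| + q)%N.

Lemma nneg_facet_mask p q (S : 'M[R]_(p, q)) j : nneg_mx (facet_mask S j).
Proof. by apply: nneg_mx_diag => a b; rewrite mxE ler0n. Qed.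

Lemma col_facet_mask p q (M S : 'M[R]_(p, q)) j :
  same_zeros M S -> col j (facet_mask S j *m M) = 0.
Proof.
move=> hMS; apply/matrixP => i k; rewrite mxE mul_diag_mx !mxE.
by case: eqP => [/eqP|]; rewrite -?hMS ?mul0r // => /eqP->; rewrite mulr0.
Qed.

Lemma mulmx_col0 n q (x : 'rV[R]_n) (B : 'M_(n, q)) k :
  col k B = 0 -> (x *m B) 0 k = 0.
Proof.
move=> Bk0; have : col k (x *m B) = 0 by rewrite colE -mulmxA -colE Bk0 mulmx0.
by move/matrixP/(_ 0 0); rewrite !mxE.
Qed.

Lemma col_row_full_eq0 n p q (A : 'M[R]_(p, n)) (B : 'M_(n, q)) j :
  row_full A -> col j (A *m B) = 0 -> col j B = 0.
Proof.
rewrite !colE -mulmxA => fA ABj0.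
by apply: (row_full_inj fA); rewrite ABj0 mulmx0.
Qed.

Lemma full_pointed_pair_col' n p q (A : 'M[R]_(p, n)) (B : 'M_(n, q.+1)) j :
  full_pointed_pair A B -> redundant_col B j -> full_pointed_pair A (col' j B).
Proof.
have nneg_unlift (x : 'rV[R]_n) : nneg_mx (x *m col' j B) -> 0 <= (x *m B) 0 j ->
    nneg_mx (x *m B).
  move=> hx hj a k; rewrite [a]ord1; case: (unliftP j k) => [k' ->|->] //.
  by have := hx 0 k'; rewrite mul_col' mxE.
case=> KB S_ge0 fB fA red_j; split => //.
- by move=> x hx; apply: KB; apply: nneg_unlift hx (red_j x hx).
- by rewrite mul_col'; apply: nneg_mx_col'.
apply/inj_row_free => x xB0; apply: (row_free_inj fB); rewrite mul0mx.
have nneg0 : nneg_mx (0 : 'rV[R]_q) by move=> a b; rewrite mxE.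
have xBj : (x *m B) 0 j = 0.
  apply/eqP; rewrite eq_le red_j ?xB0 // andbT.
  by have := red_j (- x); rewrite mulNmx xB0 oppr0 mulNmx mxE oppr_ge0; apply.
apply/matrixP => a k; rewrite [a]ord1 [RHS]mxE; case: (unliftP j k) => [k' ->|->] //.
by move/matrixP: xB0 => /(_ 0 k'); rewrite mul_col' !mxE.
Qed.

Lemma mulmx_facet_mask_id p q (S : 'M[R]_(p, q)) j (y : 'rV_p) :
  nneg_mx y -> nneg_mx S -> (y *m S) 0 j = 0 -> y *m facet_mask S j = y.
Proof.
move=> y_ge0 S_ge0; rewrite mxE => /psumr_eq0P yS0.
apply/matrixP => a i; rewrite [a]ord1 mul_mx_diag !mxE.
have [_|Sij] := eqVneq (S i j) 0; first by rewrite mulr1.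
by have /eqP := yS0 (fun k _ => mulr_ge0 (y_ge0 0 k) (S_ge0 k j)) i isT;
  rewrite mulf_eq0 (negPf Sij) orbF => /eqP->; rewrite mul0r.
Qed.

Lemma facet_generated n p q (A : 'M[R]_(p, n)) (B : 'M_(n, q)) j (x : 'rV_n) :
  full_pointed_pair A B -> nneg_mx (x *m B) -> (x *m B) 0 j = 0 ->
  exists2 y, nneg_mx y & x = y *m facet_rows A B j.
Proof.
case=> KB S_ge0 _ _ xB_ge0 xBj; have [y y_ge0 xE] := KB x xB_ge0.
exists y => //; rewrite /facet_rows mulmxA mulmx_facet_mask_id //.
by rewrite mulmxA -xE.
Qed.

Lemma col_facet_rows_mul n p q (A : 'M[R]_(p, n)) (B : 'M_(n, q)) j :
  col j (facet_rows A B j *m B) = 0.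
Proof. by rewrite -mulmxA col_facet_mask. Qed.

Lemma facet_pair_mul n p q (A : 'M[R]_(p, n)) (B : 'M_(n, q)) j :
  col_base (facet_rows A B j) *m (row_base (facet_rows A B j) *m B) =
  facet_mask (A *m B) j *m (A *m B).
Proof. by rewrite mulmxA mulmx_base mulmxA. Qed.

(* A facet of a cone presented by [(A, B)], re-presented in its own linear span. *)
Lemma full_pointed_pair_facet n p q (A : 'M[R]_(p, n)) (B : 'M_(n, q)) j :
  full_pointed_pair A B ->
  full_pointed_pair (col_base (facet_rows A B j)) (row_base (facet_rows A B j) *m B).
Proof.
move=> hAB; have [_ S_ge0 fB _] := hAB; set AI := facet_rows A B j.
have fAI := row_base_free AI; split.
- move=> x2; rewrite mulmxA => xB_ge0.
  have xBj : (x2 *m row_base AI *m B) 0 j = 0.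
    apply/eqP; rewrite -col_row_eq0 -sub_kermx_col.
    have sAI : (x2 *m row_base AI <= AI)%MS.
      by apply: submx_trans (submxMl _ _) _; rewrite eq_row_base.
    apply: submx_trans (submxMr B sAI) _.
    by rewrite sub_kermx_col col_facet_rows_mul.
  have [y y_ge0 xE] := facet_generated hAB xB_ge0 xBj.
  exists y => //; apply: (row_free_inj fAI).
  by rewrite xE -mulmxA mulmx_base.
- by rewrite facet_pair_mul; apply: nneg_mx_mul => //; apply: nneg_facet_mask.
- by rewrite /row_free mxrankMfree.
- exact: col_base_full.
Qed.

Lemma support_size_col' p q (S : 'M[R]_(p, q.+1)) j :
  (support_size (col' j S) < support_size S)%N.
Proof.
rewrite /support_size addnS ltnS leq_add2r; apply/subset_leq_card/subsetP => i.
rewrite !inE; apply: contra => /eqP/matrixP Si0; apply/eqP/matrixP => a b.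
by have := Si0 a (lift j b); rewrite !mxE.
Qed.

Lemma support_size_facet_mask p q (S : 'M[R]_(p, q)) j :
  col j S != 0 -> (support_size (facet_mask S j *m S) < support_size S)%N.
Proof.
move=> Sj; have [i1 Si1] : exists i1, S i1 j != 0.
  apply/existsP; apply: contraR Sj => /existsPn S0.
  by apply/eqP/matrixP => i k; rewrite !mxE; apply/eqP/negbNE/S0.
have row_mask i : row i (facet_mask S j *m S) = (S i j == 0)%:R *: row i S.
  by apply/rowP => k; rewrite mul_diag_mx !mxE.
rewrite /support_size ltn_add2r; apply/proper_card/properP; split.
  by apply/subsetP => i; rewrite !inE row_mask; apply: contra => /eqP->; rewrite scaler0.
exists i1; rewrite !inE ?row_mask ?(negPf Si1) ?scale0r ?eqxx //.
by apply: contra Si1 => /eqP/rowP/(_ j); rewrite !mxE => ->.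
Qed.

Lemma irredundant_col_neq0 n p q (A : 'M[R]_(p, n)) (B : 'M_(n, q.+1)) j :
  full_pointed_pair A B -> ~ redundant_col B j -> col j (A *m B) != 0.
Proof.
case=> _ _ _ fA red_j; apply/eqP => ABj0; apply: red_j => x _.
by rewrite (mulmx_col0 _ (col_row_full_eq0 fA ABj0)).
Qed.

Lemma irredundant_witness n q (B : 'M[R]_(n, q.+1)) j :
  ~ redundant_col B j ->
  exists2 x : 'rV_n, nneg_mx (x *m col' j B) & (x *m B) 0 j < 0.
Proof.
move=> red_j; apply: NNPP => no_x; apply: red_j => x x_ge0.
by rewrite leNgt; apply/negP => xBj; apply: no_x; exists x.
Qed.

(* A point in the relative interior of the facet cut out by an irredundant
   column [j]: [x0] violates only inequality [j], the sum of the rows of [A]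
   satisfies every inequality that is not identically zero strictly, and a
   positive combination of the two lies on the facet. *)
Lemma facet_relint n p q (A : 'M[R]_(p, n)) (B : 'M_(n, q.+1)) j :
  full_pointed_pair A B -> ~ redundant_col B j ->
  exists x : 'rV_n, [/\ nneg_mx (x *m B), (x *m B) 0 j = 0 &
    forall k, k != j -> (x *m B) 0 k = 0 -> col k B = 0].
Proof.
move=> hAB red_j; have [_ S_ge0 _ fA] := hAB.
have [x0 x0B_ge0 x0Bj] := irredundant_witness red_j.
have x0B_ge0' k : k != j -> 0 <= (x0 *m B) 0 k.
  case: (unliftP j k) => [k' ->|->]; rewrite ?eqxx // => _.
  by have := x0B_ge0 0 k'; rewrite mul_col' mxE.
pose c : 'rV_n := const_mx 1 *m A.
have cBE : c *m B = const_mx 1 *m (A *m B) by rewrite mulmxA.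
have cB_ge0 k : 0 <= (c *m B) 0 k.
  by rewrite cBE; apply: nneg_mx_mul => // a b; rewrite mxE.
have cB_eq0 k : (c *m B) 0 k = 0 -> col k B = 0.
  move=> cBk0; apply: (col_row_full_eq0 fA); apply/eqP.
  by rewrite -[_ == 0]negbK -(colsum_gt0 _ S_ge0) -cBE cBk0 ltxx.
set al := (c *m B) 0 j; set be := (x0 *m B) 0 j.
have al_gt0 : 0 < al by rewrite /al cBE colsum_gt0 // irredundant_col_neq0.
exists (al *: x0 - be *: c).
have xBE k : ((al *: x0 - be *: c) *m B) 0 k = al * (x0 *m B) 0 k - be * (c *m B) 0 k.
  by rewrite mulmxBl -!scalemxAl !mxE.
split.
- move=> a k; rewrite [a]ord1 xBE; have [->|kj] := eqVneq k j.
    by rewrite /be mulrC subrr.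
  rewrite subr_ge0 (@le_trans _ _ 0) ?(mulr_le0_ge0 (ltW x0Bj)) //.
  by rewrite mulr_ge0 ?(ltW al_gt0) ?x0B_ge0'.
- by rewrite xBE /be mulrC subrr.
move=> k kj; rewrite xBE => /eqP; rewrite subr_eq0 => /eqP e.
apply: cB_eq0; apply/eqP.
have : be * (c *m B) 0 k == 0.
  by rewrite eq_le mulr_le0_ge0 ?(ltW x0Bj) //= -e mulr_ge0 ?(ltW al_gt0) ?x0B_ge0'.
by rewrite mulf_eq0 (negPf (ltr0_neq0 x0Bj)).
Qed.

(* Every [v] on the hyperplane of column [j] is a point of the facet minus a
   multiple of a relative interior point [x] of the facet. *)
Lemma facet_span n p q (A : 'M[R]_(p, n)) (B : 'M_(n, q)) j (x : 'rV_n) :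
  full_pointed_pair A B -> nneg_mx (x *m B) -> (x *m B) 0 j = 0 ->
  (forall k, k != j -> (x *m B) 0 k = 0 -> col k B = 0) ->
  forall v : 'rV_n, (v *m B) 0 j = 0 -> (v <= facet_rows A B j)%MS.
Proof.
move=> hAB xB_ge0 xBj x_relint v vBj.
pose N := \sum_k `|(v *m B) 0 k| / (x *m B) 0 k.
have vxBE k : ((v + N *: x) *m B) 0 k = (v *m B) 0 k + N * (x *m B) 0 k.
  by rewrite mulmxDl -scalemxAl mxE [in X in _ + X]mxE.
have vxB_ge0 : nneg_mx ((v + N *: x) *m B).
  move=> a k; rewrite [a]ord1 vxBE.
  have [xBk0|xBk] := eqVneq ((x *m B) 0 k) 0.
    rewrite xBk0 mulr0 addr0; have [->|kj] := eqVneq k j; first by rewrite vBj.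
    by rewrite (mulmx_col0 _ (x_relint k kj xBk0)).
  have xBk_gt0 : 0 < (x *m B) 0 k by rewrite lt0r xBk xB_ge0.
  have : `|(v *m B) 0 k| / (x *m B) 0 k <= N.
    by rewrite /N (bigD1 k) //= lerDl sumr_ge0 // => i _; rewrite divr_ge0.
  rewrite ler_pdivrMr // => le_vN.
  by have := ler_norm (- (v *m B) 0 k); rewrite normrN; lra.
have vxBj : ((v + N *: x) *m B) 0 j = 0.
  by rewrite vxBE vBj xBj mulr0 addr0.
have [y _ yE] := facet_generated hAB vxB_ge0 vxBj.
have [y' _ y'E] := facet_generated hAB xB_ge0 xBj.
rewrite -(addrK (N *: x) v); apply: addmx_sub; first by rewrite yE submxMl.
by rewrite eqmx_opp scalemx_sub // y'E submxMl.
Qed.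

Lemma facet_rank n p q (A : 'M[R]_(p, n)) (B : 'M_(n, q.+1)) j :
  full_pointed_pair A B -> ~ redundant_col B j ->
  (n <= (\rank (facet_rows A B j)).+1)%N.
Proof.
move=> hAB red_j; have [x [xB_ge0 xBj x_relint]] := facet_relint hAB red_j.
have sub_facet : (kermx (col j B) <= facet_rows A B j)%MS.
  apply/row_subP => k; apply: (facet_span hAB xB_ge0 xBj x_relint).
  apply/eqP; rewrite -col_row_eq0 colE -mulmxA -colE -row_mul mulmx_ker.
  by rewrite linear0.
have := mxrankS sub_facet; rewrite mxrank_ker leq_subLR => /leq_trans; apply.
by rewrite -[(\rank (facet_rows _ _ _)).+1]add1n leq_add2r rank_leq_col.
Qed.

(* Given [w >= 0] in the row space, subtract the largest multiple of the
   positive column sums [u] keeping it nonnegative; the result vanishes in some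
   column [j0] and therefore lies in the row space of the corresponding facet. *)
Lemma slack_condition_of_facets p q (M : 'M[R]_(p, q.+1)) :
  nneg_mx M -> (forall j, col j M != 0) ->
  (forall j, exists2 D : 'M_p, nneg_mx D &
     [/\ col j (D *m M) = 0, (\rank (D *m M)).+1 = \rank M & slack_condition (D *m M)]) ->
  slack_condition M.
Proof.
move=> M_ge0 Mj_neq0 facets w wM w_ge0.
pose u : 'rV_q.+1 := const_mx 1 *m M.
have u_gt0 j : 0 < u 0 j by rewrite colsum_gt0.
pose j0 := [arg min_(j < ord0) (w 0 j / u 0 j)]%O.
have j0_min j : w 0 j0 / u 0 j0 <= w 0 j / u 0 j.
  by rewrite /j0; case: arg_minP => // i _; apply.
pose t := w 0 j0 / u 0 j0; pose z := w - t *: u.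
have zE j : z 0 j = w 0 j - t * u 0 j by rewrite !mxE.
have z_ge0 : nneg_mx z.
  by move=> a j; rewrite [a]ord1 zE subr_ge0 -ler_pdivlMr.
have zj0 : z 0 j0 = 0 by rewrite zE divfK ?subrr ?gt_eqF.
have [D D_ge0 [DMj0 rkDM slackDM]] := facets j0.
have zDM : (z <= D *m M)%MS.
  apply: submx_trans
    (capmx_sub_of_rank_succ (K := kermx (delta_mx j0 0 : 'cV_q.+1)) _ _ rkDM).
  - rewrite sub_capmx sub_kermx_col col_row_eq0 zj0 eqxx andbT addmx_sub //.
    by rewrite eqmx_opp scalemx_sub // submxMl.
  - by rewrite sub_capmx submxMl sub_kermx_col DMj0 /=.
  - by rewrite sub_kermx_col Mj_neq0.
have [y y_ge0 zE'] := slackDM z zDM z_ge0.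
exists (y *m D + t *: const_mx 1).
  move=> a j; rewrite mxE [in X in _ + X]mxE [const_mx _ _ _]mxE mulr1.
  by rewrite addr_ge0 ?(nneg_mx_mul y_ge0 D_ge0) ?divr_ge0 ?(ltW (u_gt0 j0)).
by rewrite mulmxDl -scalemxAl -mulmxA -zE' addrNK.
Qed.

Definition support_bound n p q (M : 'M[R]_(p, q)) :=
  (n <= \rank M)%N /\ (nneg_mx M -> \rank M = n -> slack_condition M).

Lemma support_bound_col' n p q (M : 'M[R]_(p, q.+1)) j :
  support_bound n (col' j M) -> support_bound n M.
Proof.
case=> rk_ge slackM'; have le_rk := mxrank_col' M j.
split=> [|M_ge0 rkM]; first exact: leq_trans rk_ge le_rk.
have rkM' : \rank (col' j M) = \rank M.
  by apply/eqP; rewrite eqn_leq le_rk rkM rk_ge.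
apply: (slack_condition_col' rkM'); apply: slackM'; last by rewrite rkM'.
exact: nneg_mx_col'.
Qed.

Lemma support_bound_facets n p q (A : 'M[R]_(p, n)) (B : 'M_(n, q.+1)) M :
  full_pointed_pair A B -> same_zeros M (A *m B) -> (forall j, ~ redundant_col B j) ->
  (forall j, support_bound (\rank (facet_rows A B j)) (facet_mask (A *m B) j *m M)) ->
  support_bound n M.
Proof.
move=> hAB MS irred facets; set S := A *m B in MS facets.
have Mj_neq0 j : col j M != 0 by rewrite (same_zeros_col _ MS) irredundant_col_neq0.
have rk_facet_lt j : (\rank (facet_mask S j *m M) < \rank M)%N.
  apply: (mxrank_ltn_notsub (K := kermx (delta_mx j 0 : 'cV_q.+1))) (submxMl _ _) _ _.
    by rewrite sub_kermx_col col_facet_mask.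
  by rewrite sub_kermx_col Mj_neq0.
have rk_facet_ge j : (n <= (\rank (facet_mask S j *m M)).+1)%N.
  by apply: leq_trans (facet_rank hAB (irred j)) _; rewrite ltnS; case: (facets j).
split=> [|M_ge0 rkM]; first exact: leq_trans (rk_facet_ge ord0) (rk_facet_lt ord0).
apply: (slack_condition_of_facets M_ge0 Mj_neq0) => j.
have [rkAI slack_facet] := facets j.
exists (facet_mask S j); first exact: nneg_facet_mask.
have rkDM : (\rank (facet_mask S j *m M)).+1 = \rank M.
  by apply/eqP; rewrite eqn_leq rk_facet_lt rkM rk_facet_ge.
split; rewrite ?col_facet_mask //; apply: slack_facet.
  exact: nneg_mx_mul (nneg_facet_mask _ _) M_ge0.
apply/eqP; rewrite eqn_leq rkAI andbT -ltnS rkDM rkM.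
exact: facet_rank hAB (irred j).
Qed.

(* Induction on the number of nonzero rows plus the number of columns of the
   slack matrix: drop a redundant column, or else pass to the facets. *)
Lemma full_pointed_pair_support_bound n p q (A : 'M[R]_(p, n)) (B : 'M_(n, q))
    (M : 'M_(p, q)) :
  full_pointed_pair A B -> same_zeros M (A *m B) -> support_bound n M.
Proof.
have [N] := ubnP (support_size (A *m B)); elim: N => // N IH in n p q A B M *.
case: q B M => [|q] B M ltN hAB MS.
  have [_ _ fB _] := hAB.
  have n0 : n = 0%N by apply/eqP; rewrite -leqn0 -(eqP fB) rank_leq_col.
  split=> [|_ _ w _ _]; first by rewrite n0.
  by exists 0; [move=> a b; rewrite mxE | rewrite !thinmx0].
have [[j red_j]|irred] := classic (exists j, redundant_col B j).
  apply: (support_bound_col' (j := j)); apply: IH (full_pointed_pair_col' hAB red_j) _.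
    by rewrite mul_col'; apply: leq_trans (support_size_col' _ _) _.
  by rewrite mul_col'; apply: same_zeros_col'.
apply: (support_bound_facets hAB MS (fun j red_j => irred (ex_intro _ j red_j))) => j.
apply: IH (full_pointed_pair_facet j hAB) _; rewrite facet_pair_mul.
  apply: leq_trans (support_size_facet_mask _) ltN.
  by rewrite irredundant_col_neq0 // => red_j; apply: irred; exists j.
exact: same_zeros_diag_mul.
Qed.

End PointedCones.

Section SlackMatrices.
Variable R : realType.

Lemma hrepE n q (B : 'M[R]_(n, q)) x : hrep B x <-> nneg_mx (x *m B).
Proof. by split=> [xB_ge0 a j|xB_ge0 j]; rewrite ?[a]ord1 ?xB_ge0. Qed.

Lemma vrepE p n (A : 'M[R]_(p, n)) x : vrep A x <-> exists2 y, nneg_mx y & x = y *m A.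
Proof.
split=> [[y [y_ge0 ->]]|[y y_ge0 ->]]; exists y => //.
by move=> a i; rewrite [a]ord1.
Qed.

Lemma slack_condition_of_slack_matrix n p q (K : 'rV[R]_n -> Prop) (S : 'M_(p, q)) :
  slack_matrix_of K S -> slack_condition S.
Proof.
case=> A [B [KH [KV ->]]] w /submxP [X ->] w_ge0.
have /KV/vrepE [y y_ge0 XA] : K (X *m A) by apply/KH/hrepE; rewrite -mulmxA.
by exists y; rewrite // mulmxA XA mulmxA.
Qed.

Lemma hrep_vrep_base p q (M : 'M[R]_(p, q)) :
  nneg_mx M -> slack_condition M ->
  forall x, hrep (row_base M) x <-> vrep (col_base M) x.
Proof.
move=> M_ge0 slackM x; rewrite hrepE vrepE; split=> [xB_ge0|[y y_ge0 ->]]; last first.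
  by rewrite -mulmxA mulmx_base; apply: nneg_mx_mul.
have xM : (x *m row_base M <= M)%MS.
  by apply: submx_trans (submxMl _ _) _; rewrite eq_row_base.
have [y y_ge0 xE] := slackM _ xM xB_ge0; exists y => //.
by apply: (row_free_inj (row_base_free M)); rewrite xE -mulmxA mulmx_base.
Qed.

Lemma slack_matrix_of_slack_condition p q (M : 'M[R]_(p, q)) :
  nneg_mx M -> slack_condition M -> slack_matrix_of (hrep (row_base M)) M.
Proof.
move=> M_ge0 slackM; exists (col_base M), (row_base M).
by split=> //; split; [exact: hrep_vrep_base | rewrite mulmx_base].
Qed.

Lemma pointed_hrep n q (B : 'M[R]_(n, q)) : row_free B -> pointed (hrep B).
Proof.
move=> fB x /hrepE xB_ge0 /hrepE nxB_ge0; apply: (row_free_inj fB).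
apply/matrixP => a k; rewrite [a]ord1 mul0mx [RHS]mxE; apply/eqP.
by rewrite eq_le xB_ge0 andbT; have := nxB_ge0 0 k; rewrite mulNmx mxE oppr_ge0.
Qed.

Lemma cone_dim_vrep n p (K : 'rV[R]_n -> Prop) (A : 'M_(p, n)) :
  (forall x, K x <-> vrep A x) -> cone_dim K (\rank A).
Proof.
move=> KV; exists <<A>>%MS; split; [|split; last exact: mxrank_gen].
  by move=> x /KV/vrepE [y _ ->]; rewrite genmxE submxMl.
move=> V KV'; rewrite genmxE; apply/row_subP => i; apply: KV'; apply/KV/vrepE.
by exists (delta_mx 0 i); [apply: nneg_mx_delta | rewrite rowE].
Qed.

Lemma cone_dim_unique n (K : 'rV[R]_n -> Prop) d1 d2 :
  cone_dim K d1 -> cone_dim K d2 -> d1 = d2.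
Proof.
case=> [U1 [KU1 [minU1 <-]]] [U2 [KU2 [minU2 <-]]].
by apply/eqP; rewrite eqn_leq !mxrankS ?minU1 ?minU2.
Qed.

Lemma full_pointed_pair_of_slack_matrix n p q (K : 'rV[R]_n -> Prop)
    (A : 'M_(p, n)) (B : 'M_(n, q)) :
  (forall x, K x <-> hrep B x) -> (forall x, K x <-> vrep A x) -> pointed K ->
  full_pointed_pair (col_base A) (row_base A *m B).
Proof.
move=> KH KV Kpt; have fA := row_base_free A; split.
- move=> x; rewrite mulmxA => /hrepE/KH/KV/vrepE [y y_ge0 xE].
  by exists y => //; apply: (row_free_inj fA); rewrite xE -mulmxA mulmx_base.
- rewrite mulmxA mulmx_base => i j.
  have /KH/hrepE : K (row i A).
    by apply/KV/vrepE; exists (delta_mx 0 i); [apply: nneg_mx_delta | rewrite rowE].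
  by rewrite -row_mul => /(_ 0 j); rewrite mxE.
- apply/inj_row_free => x xB0; apply: (row_free_inj fA); rewrite mul0mx.
  have K0 y : y *m B = 0 -> K y.
    by move=> yB0; apply/KH/hrepE; rewrite yB0 => a b; rewrite mxE.
  by apply: Kpt; apply: K0; rewrite ?mulNmx -mulmxA xB0 ?oppr0.
- exact: col_base_full.
Qed.

Lemma same_zeros_of_inc_mx p q (M S : 'M[R]_(p, q)) :
  inc_mx S = inc_mx M -> same_zeros M S.
Proof.
move=> /matrixP incE i j; have := incE i j; rewrite !mxE.
by case: (M i j == 0); case: (S i j == 0) => // /eqP;
  rewrite ?oner_eq0 // eq_sym oner_eq0.
Qed.

End SlackMatrices.

Theorem theorem4p3 (R : realType) (p q : nat) (M : 'M[R]_(p, q)) :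
  (forall i j, 0 <= M i j) -> (2 <= \rank M)%N ->
  (is_slack_matrix M <->
   exists (n : nat) (K : 'rV[R]_n -> Prop),
     polyhedral_cone K /\ pointed K /\ cone_dim K (\rank M) /\
     incidence_matrix_of K (inc_mx M)).
Proof.
move=> M_ge0 _; split.
  case=> n [K slackK]; have slackM := slack_condition_of_slack_matrix slackK.
  have hM := slack_matrix_of_slack_condition M_ge0 slackM.
  exists (\rank M), (hrep (row_base M)); split; first by exists p, q, M.
  split; first exact: pointed_hrep (row_base_free M).
  split; last by exists M.
  have := cone_dim_vrep (hrep_vrep_base M_ge0 slackM).
  by rewrite (eqP (col_base_full M)).
case=> n [K [_ [Kpt [dimK [S [[A [B [KH [KV ->]]]] incE]]]]]].
have hAB := full_pointed_pair_of_slack_matrix KH KV Kpt.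
have rkA : \rank A = \rank M := cone_dim_unique (cone_dim_vrep KV) dimK.
have MS : same_zeros M (col_base A *m (row_base A *m B)).
  by rewrite mulmxA mulmx_base; apply: same_zeros_of_inc_mx.
have [_ slackM] := full_pointed_pair_support_bound hAB MS.
exists (\rank M), (hrep (row_base M)).
exact: slack_matrix_of_slack_condition M_ge0 (slackM M_ge0 (esym rkA)).
Qed.
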